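(* Let $F_1=F_2=1$, $F_{k+1}=F_k+F_{k-1}$, and let $A=\{F_k : k\ge 1\}=\{1,2,3,5,8,\dots\}$. Then for every $n\ge 1$, $\mathrm{Total}(n,A)=F_{2n+1}-1$.
   Context: For an integer $n\ge 0$ and a set $A$ of positive integers with $1\in A$, the abstract generalized 2048 game $\mathrm{AGG}(n,A)$ is played on $n$ indistinguishable cells. A position assigns to each cell either nothing (empty) or a tile with a value in $A$; the initial position has all cells empty. A step, performable from any position with at least one empty cell, consists of: (i) placing a new tile of value $1$ into a chosen empty cell; then (ii) optionally choosing pairwise disjoint sets of nonempty cells, each with tile-value sum in $A$, and merging each set into a single tile of that sum placed in one of its cells, the other cells of the set becoming empty. The game ends when after a step all cells are nonempty. A position is reachable if obtainable from the initial position by finitely many steps; its total value is the sum of its tile values. $\mathrm{Total}(n,A)$ is the supremum of total values of reachable positions of $\mathrm{AGG}(n,A)$. *)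

From mathcomp Require Import all_boot.
Set Implicit Arguments. Unset Strict Implicit. Unset Printing Implicit Defensive.

Fixpoint fib (k : nat) : nat :=
  match k with
  | 0 => 0
  | k'.+1 => match k' with 0 => 1 | k''.+1 => fib k' + fib k'' end
  end.

Definition fibSet : nat -> Prop := fun v => exists k, 1 <= k /\ v = fib k.

Definition position (n : nat) := {ffun 'I_n -> option nat}.

Definition val_of (o : option nat) : nat := if o is Some v then v else 0.

Definition total n (p : position n) : nat := \sum_(c < n) val_of (p c).

Definition initial n : position n := [ffun _ => None].

Definition place n (p : position n) (i : 'I_n) : position n :=
  [ffun c => if c == i then Some 1 else p c].

(* Merging: the merge is encoded by a map g sending each nonempty cell to the
   cell of its set where the merged tile is placed (cells not in any chosen set,
   or in singleton sets, are fixed).  The sets are the fibres of g over its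
   fixed points; they are automatically pairwise disjoint. *)
Definition valid_merge n (A : nat -> Prop) (p : position n) (g : 'I_n -> 'I_n)
  : Prop :=
  (forall c, p c = None -> g c = c) /\
  (forall c, g (g c) = g c) /\
  (forall c, g c <> c -> p c <> None /\ p (g c) <> None) /\
  (forall c, g c = c -> p c <> None ->
     A (\sum_(d < n | g d == c) val_of (p d))).

Definition merge_result n (p : position n) (g : 'I_n -> 'I_n) : position n :=
  [ffun c => if (g c == c) && (p c != None)
             then Some (\sum_(d < n | g d == c) val_of (p d))
             else None].

(* One step of AGG(n, A): tiles have values in A (guaranteed since 1 \in A and
   merged sums are required to be in A). *)
Definition step n (A : nat -> Prop) (p q : position n) : Prop :=
  exists i : 'I_n, p i = None /\
  exists g : 'I_n -> 'I_n, valid_merge A (place p i) g /\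
                           q = merge_result (place p i) g.

Inductive reachable n (A : nat -> Prop) : position n -> Prop :=
  | reach_init : reachable A (initial n)
  | reach_step p q : reachable A p -> step A p q -> reachable A q.

Definition Total_is n (A : nat -> Prop) (t : nat) : Prop :=
  (forall p : position n, reachable A p -> total p <= t) /\
  (exists p : position n, reachable A p /\ total p = t).

From Pilot Require Import Defs.
From mathcomp Require Import all_boot zify.
Set Implicit Arguments. Unset Strict Implicit. Unset Printing Implicit Defensive.

(* Upper bound: every reachable position has the property that each nonempty
   set S of cells contains a tile of value at most F_{2(n-|S|)+2}.  Removing
   such small tiles one at a time shows that for every m <= n the tiles outside
   some n - m cells sum to less than F_{2m+1}; for m = n this bounds the total.
   The property survives a merge: for nonempty S take |S| - 1 cells T whose
   complement carries less than F_{2(n-|S|)+3}; some cell of S receives no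
   tile from T, so the tile merged into it is a Fibonacci number below
   F_{2(n-|S|)+3}, hence at most F_{2(n-|S|)+2}.
   Lower bound: with k free cells one can add F_m (m <= 2k) to the sum of any
   suffix of a row of tiles, by first building F_{m-1} in a fresh cell and then
   adding F_{m-2} to the extended suffix with one free cell less.  Building
   F_{2n}, F_{2n-2}, ..., F_2 in turn reaches the total F_{2n+1} - 1. *)

Lemma fibSS m : fib m.+2 = fib m.+1 + fib m.
Proof. by []. Qed.

Lemma fib_gt0 m : 0 < fib m.+1.
Proof. by elim: m => // m IH; rewrite fibSS ltn_addr. Qed.

Lemma leq_fib : {homo fib : m k / m <= k}.
Proof.
apply: homo_leq => [//|m k l|[|m]]; [exact: leq_trans | by [] | exact: leq_addr].
Qed.

Lemma fibSet_leq_fib v k : fibSet v -> v < fib k.+1 -> v <= fib k.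
Proof.
move=> [j [_ ->]] lt_fkS; case: (leqP j k) => [/leq_fib //|/leq_fib le_fkS].
by rewrite ltnNge le_fkS in lt_fkS.
Qed.

Definition small_cells n (p : position n) : Prop :=
  forall S : {set 'I_n}, 0 < #|S| ->
    exists2 c, c \in S & val_of (p c) <= fib (2 * (n - #|S|)).+2.

Lemma small_cells_complement n (p : position n) : small_cells p ->
  forall m, m <= n -> exists2 T : {set 'I_n}, #|T| = n - m &
    \sum_(c < n | c \notin T) val_of (p c) < fib (2 * m).+1.
Proof.
move=> small; elim=> [_|m IH lt_mn].
  exists setT; first by rewrite cardsT card_ord subn0.
  by rewrite big_pred0 // => c; rewrite inE.
have [T cardT sumT] := IH (ltnW lt_mn).
have [|c cT val_c] := small T; first by rewrite cardT subn_gt0.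
exists (T :\ c); first by have := cardsD1 c T; rewrite cT cardT; lia.
rewrite (bigD1 c) ?mulnS ?add2n ?fibSS; last by rewrite !inE eqxx.
rewrite (eq_bigl (fun d => d \notin T)); last first.
  by move=> d; rewrite !inE; case: (d =P c) => [->|_] /=; rewrite ?cT ?andbT.
by rewrite cardT subKn ?(ltnW lt_mn) // in val_c; rewrite -addnS leq_add.
Qed.

Lemma small_cells_initial n : small_cells (initial n).
Proof. by move=> S /card_gt0P [c cS]; exists c; rewrite ?ffunE. Qed.

Lemma small_cells_place n (p : position n) i : small_cells p -> small_cells (place p i).
Proof.
move=> small S S_gt0; case iS: (i \in S).
  by exists i; rewrite // ffunE eqxx fib_gt0.
have [c cS val_c] := small S S_gt0; exists c; rewrite // ffunE.
by case: eqP => // ci; rewrite -ci cS in iS.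
Qed.

Lemma small_cells_merge n (p : position n) g : small_cells p ->
  (forall c, g c = c -> p c <> None ->
     fibSet (\sum_(d < n | g d == c) val_of (p d))) ->
  small_cells (merge_result p g).
Proof.
move=> small fib_sums S S_gt0.
have le_Sn : #|S| <= n by rewrite -[n in _ <= n]card_ord max_card.
have [|T cardT sumT] := small_cells_complement small (m := (n - #|S|).+1); first lia.
have /subsetPn [c cS c_notin_gT] : ~~ (S \subset g @: T).
  apply/negP => /subset_leq_card /leq_trans /(_ (leq_imset_card g T)).
  by rewrite cardT; lia.
exists c; rewrite // ffunE; case: ifP => [/andP [/eqP gc pc]|//].
apply: fibSet_leq_fib; first by apply: fib_sums; last exact/eqP.
rewrite -[(_ * _).+3]/(2 + 2 * (n - #|S|)).+1 -mulnS.
apply: leq_ltn_trans sumT.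
rewrite [leqLHS]big_mkcond [leqRHS]big_mkcond; apply: leq_sum => d _.
case: (boolP (d \in T)) => dT; last by case: ifP.
by case: eqP => // gd; rewrite -gd imset_f in c_notin_gT.
Qed.

Lemma small_cells_reachable n (p : position n) :
  reachable fibSet p -> small_cells p.
Proof.
elim=> [|p0 q _ small [i [_ [g [[_ [_ [_ fib_sums]]] ->]]]]].
  exact: small_cells_initial.
by apply: small_cells_merge fib_sums; apply: small_cells_place.
Qed.

Lemma total_reachable_lt n (p : position n) :
  reachable fibSet p -> Defs.total p < fib (2 * n).+1.
Proof.
move=> /small_cells_reachable /small_cells_complement /(_ n (leqnn n)) [T].
rewrite subnn => /cards0_eq ->.
by rewrite /Defs.total (eq_bigl xpredT) // => c; rewrite inE.
Qed.

Definition packed n (s : seq nat) : position n :=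
  [ffun c : 'I_n => if c < size s then Some (nth 0 s c) else None].

Lemma val_packed n s (c : 'I_n) : val_of (packed n s c) = nth 0 s c.
Proof. by rewrite ffunE; case: ltnP => // /(nth_default 0) ->. Qed.

Lemma packed_eqNone n s (c : 'I_n) : (packed n s c == None) = (size s <= c).
Proof. by rewrite ffunE; case: ltnP. Qed.

Lemma sum_nth_ord n (u : seq nat) : size u <= n -> \sum_(i < n) nth 0 u i = sumn u.
Proof.
move=> le_un; rewrite sumnE (big_nth 0) big_mkord (big_ord_widen n _ le_un).
by rewrite [RHS]big_mkcond; apply: eq_bigr => i _; case: ltnP => // /(nth_default 0).
Qed.

Lemma sum_nth_ord_geq n a (u : seq nat) : size u <= n ->
  \sum_(i < n | a <= i) nth 0 u i = sumn (drop a u).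
Proof.
move=> le_un; rewrite -[RHS](sum_nth_ord (n := n - a)); last first.
  by rewrite size_drop leq_sub2r.
rewrite -(big_geq_mkord _ _ xpredT) -[a in LHS]add0n big_addn big_mkord.
by apply: eq_bigr => i _; rewrite nth_drop addnC.
Qed.

Lemma total_packed n s : size s <= n -> Defs.total (packed n s) = sumn s.
Proof.
move=> le_sn; rewrite /Defs.total -(sum_nth_ord le_sn).
by apply: eq_bigr => c _; rewrite val_packed.
Qed.

Lemma place_packed n s (lt_sn : size s < n) :
  place (packed n s) (Ordinal lt_sn) = packed n (rcons s 1).
Proof.
apply/ffunP => c.
by rewrite !ffunE size_rcons ltnS nth_rcons -val_eqE /=; case: ltngtP.
Qed.

Section Collapse.
Variables (n : nat) (a : 'I_n) (b : nat).

Definition collapse (d : 'I_n) : 'I_n := if a <= d <= b then a else d.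

Lemma collapse_fixed d : (collapse d == d) = ~~ (a < d <= b).
Proof.
rewrite /collapse; case: ifP => [/andP [le_ad ->]|out].
  by rewrite -val_eqE /= andbT ltn_neqAle le_ad andbT negbK.
by rewrite eqxx; apply/esym/negP => /andP [/ltnW le_ad le_db]; rewrite le_ad le_db in out.
Qed.

Lemma collapse_idem d : collapse (collapse d) = collapse d.
Proof.
rewrite /collapse; case: (boolP (a <= d <= b)) => [_|/negbTE out] /=; first by case: ifP.
by rewrite out.
Qed.

Hypothesis le_ab : a <= b.

Lemma sum_collapse_lt F (c : 'I_n) : c < a ->
  \sum_(d < n | collapse d == c) F d = F c.
Proof.
move=> lt_ca; rewrite (big_pred1 c) // => d /=; rewrite /collapse.
case: ifP => // /andP [le_ad _]; rewrite -!val_eqE /=.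
by rewrite !gtn_eqF // (leq_trans lt_ca).
Qed.

Lemma sum_collapse_root F :
  \sum_(d < n | collapse d == a) F d = \sum_(d < n | a <= d <= b) F d.
Proof.
apply: eq_bigl => d; rewrite /collapse; case: ifP => [_|]; first by rewrite eqxx.
by case: eqP => // ->; rewrite leqnn le_ab.
Qed.

End Collapse.

Section PackedMerge.
Variables (n : nat) (s : seq nat) (a : nat).
Hypotheses (le_as : a <= size s) (lt_sn : size s < n).

Let a_ord : 'I_n := Ordinal (leq_ltn_trans le_as lt_sn).
Let g := collapse a_ord (size s).
Let u := rcons s 1.

Lemma fibre_sum_lt (c : 'I_n) : c < a ->
  \sum_(d < n | g d == c) val_of (packed n u d) = nth 0 s c.
Proof.
by move=> lt_ca; rewrite sum_collapse_lt // val_packed nth_rcons (leq_trans lt_ca le_as).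
Qed.

Lemma fibre_sum_root :
  \sum_(d < n | g d == a_ord) val_of (packed n u d) = (sumn (drop a s)).+1.
Proof.
rewrite /g sum_collapse_root // (eq_bigr (fun d : 'I_n => nth 0 u d)); last first.
  by move=> d _; rewrite val_packed.
rewrite -addn1 -sumn_rcons -drop_rcons // -(sum_nth_ord_geq a (n := n)) ?size_rcons //.
rewrite [RHS](bigID (fun d : 'I_n => d <= size s)) /= [X in _ = _ + X]big1 ?addn0 //.
by move=> d /andP [_]; rewrite -ltnNge => lt_sd; apply: nth_default; rewrite size_rcons.
Qed.

Lemma valid_merge_collapse : (forall x, x \in s -> fibSet x) ->
  fibSet (sumn (drop a s)).+1 -> valid_merge fibSet (packed n u) g.
Proof.
move=> fib_s fib_sum; split; [|split; [|split]].
- move=> c /eqP; rewrite packed_eqNone size_rcons => lt_sc.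
  by apply/eqP; rewrite collapse_fixed (leqNgt c) lt_sc andbF.
- exact: collapse_idem.
- move=> c /eqP; rewrite collapse_fixed negbK => /andP [lt_ac le_cs].
  have -> : g c = a_ord by rewrite /g /collapse (ltnW lt_ac) le_cs.
  by split; apply/eqP; rewrite packed_eqNone size_rcons -ltnNge ltnS.
- move=> c /eqP; rewrite collapse_fixed => fixed.
  move=> /eqP; rewrite packed_eqNone size_rcons -ltnNge ltnS.
  case: (ltngtP c a) => [lt_ca|lt_ac|ca] le_cs.
  + by rewrite fibre_sum_lt //; apply/fib_s/mem_nth/(leq_trans lt_ca le_as).
  + by rewrite lt_ac le_cs in fixed.
  + by rewrite (_ : c = a_ord) ?fibre_sum_root //; apply: val_inj.
Qed.

Lemma merge_result_collapse :
  merge_result (packed n u) g = packed n (rcons (take a s) (sumn (drop a s)).+1).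
Proof.
apply/ffunP => c; rewrite ffunE packed_eqNone size_rcons -ltnNge ltnS collapse_fixed.
rewrite ffunE size_rcons size_takel // nth_rcons size_takel // ltnS.
case: (ltngtP c a) => [lt_ca|lt_ac|ca] /=.
- by rewrite (leq_trans (ltnW lt_ca) le_as) fibre_sum_lt // nth_take.
- by rewrite andNb.
- by rewrite ca le_as (_ : c = a_ord) ?fibre_sum_root //; apply: val_inj.
Qed.

Lemma step_packed : (forall x, x \in s -> fibSet x) -> fibSet (sumn (drop a s)).+1 ->
  step fibSet (packed n s) (packed n (rcons (take a s) (sumn (drop a s)).+1)).
Proof.
move=> fib_s fib_sum; exists (Ordinal lt_sn); split; first by apply/eqP; rewrite packed_eqNone.
exists g; rewrite place_packed -/u merge_result_collapse.
by split=> //; apply: valid_merge_collapse.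
Qed.
End PackedMerge.

Lemma reachable_packed_rcons_fib n t a k m :
  reachable fibSet (packed n t) -> (forall x, x \in t -> fibSet x) ->
  size t + k <= n -> a <= size t -> 0 < m <= 2 * k ->
  fibSet (sumn (drop a t) + fib m) ->
  reachable fibSet (packed n (rcons (take a t) (sumn (drop a t) + fib m))).
Proof.
elim/ltn_ind: m t a k => -[//|[|[|m]]] IH t a k reach_t fib_t le_tkn le_at /andP [_ le_mk] fib_sum.
1,2: apply: reach_step reach_t _; rewrite addn1 in fib_sum *; apply: step_packed => //; lia.
have reach_t' : reachable fibSet (packed n (rcons t (fib m.+2))).
  have := IH m.+2 _ t (size t) k reach_t fib_t le_tkn (leqnn _).
  by rewrite take_size drop_size add0n; apply=> //; [lia | exists m.+2].
have take_t' : take a (rcons t (fib m.+2)) = take a t by rewrite -cats1 takel_cat.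
have := IH m.+1 _ (rcons t (fib m.+2)) a k.-1 reach_t'.
rewrite take_t' drop_rcons // sumn_rcons -addnA -fibSS size_rcons; apply=> //; try lia.
by move=> x; rewrite mem_rcons inE => /predU1P [->|/fib_t]; first exists m.+2.
Qed.

Fixpoint even_fibs j := if j is j'.+1 then fib (2 * j) :: even_fibs j' else [::].

Lemma size_even_fibs j : size (even_fibs j) = j.
Proof. by elim: j => //= j ->. Qed.

Lemma sumn_even_fibs j : (sumn (even_fibs j)).+1 = fib (2 * j).+1.
Proof.
elim: j => // j IH; rewrite -[sumn _]/(fib (2 * j.+1) + sumn (even_fibs j)).
by rewrite -addnS IH mulnS add2n fibSS.
Qed.

Lemma reachable_packed_even_fibs n j t :
  reachable fibSet (packed n t) -> (forall x, x \in t -> fibSet x) ->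
  size t + j <= n -> reachable fibSet (packed n (t ++ even_fibs j)).
Proof.
elim: j t => [|j IH] t reach_t fib_t le_tjn; first by rewrite cats0.
have fib_2j : fibSet (fib (2 * j.+1)) by exists (2 * j.+1).
rewrite -[even_fibs _]/(fib (2 * j.+1) :: even_fibs j) -cat_rcons.
apply: IH; last by rewrite size_rcons; lia.
  have := reachable_packed_rcons_fib (m := 2 * j.+1) reach_t fib_t le_tjn (leqnn _).
  by rewrite take_size drop_size add0n; apply=> //; lia.
by move=> x; rewrite mem_rcons inE => /predU1P [->|/fib_t].
Qed.

Theorem mainTheorem12 (n : nat) : 1 <= n ->
  Total_is n fibSet (fib (2 * n + 1) - 1).
Proof.
move=> _; rewrite addn1; split=> [p /total_reachable_lt|]; first lia.
exists (packed n (even_fibs n)); split.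
  have packed_nil : packed n [::] = initial n by apply/ffunP => c; rewrite !ffunE.
  by apply: (reachable_packed_even_fibs (t := [::])); rewrite ?packed_nil //; apply: reach_init.
by rewrite total_packed ?size_even_fibs // -sumn_even_fibs subn1.
Qed.
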